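(* $U_{2,4}\oplus U_{2,4}$ is an excluded minor for $\mathcal M_2$: it is not in $\mathcal M_2$, but every proper minor of it is in $\mathcal M_2$.
   Context: An integer matrix $A$ is $\Delta$-modular if the determinant of every $\operatorname{rank}(A)\times\operatorname{rank}(A)$ submatrix has absolute value at most $\Delta$. $\mathcal M_2$ is the class of matroids isomorphic to the real vector matroid of the columns of some $2$-modular matrix. *)

From HB Require Import structures.
From mathcomp Require Import all_boot all_order all_algebra.
From mathcomp Require Import Rstruct.
From Stdlib Require Rdefinitions.
Set Implicit Arguments. Unset Strict Implicit. Unset Printing Implicit Defensive.
Import Order.TTheory GRing.Theory Num.Theory.
Local Open Scope ring_scope.

(* A matroid on a finite ground set T (the whole type) is given by its
   independence predicate on subsets of T. *)

Definition matroid_iso (T1 T2 : finType) (I1 : {set T1} -> bool)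
  (I2 : {set T2} -> bool) : Prop :=
  exists f : T1 -> T2, bijective f /\ forall X : {set T1}, I1 X = I2 (f @: X).

Definition real_vector_matroid (m n : nat) (A : 'M[int]_(m, n))
  (X : {set 'I_n}) : bool :=
  (\rank (colsub (fun i : 'I_#|X| => enum_val i) (map_mx (intr : int -> Rdefinitions.R) A))
    == #|X|)%N.

Definition Delta_modular (Delta : nat) (m n : nat) (A : 'M[int]_(m, n)) : Prop :=
  let r := \rank (map_mx (intr : int -> Rdefinitions.R) A) in
  forall (f : 'I_r -> 'I_m) (g : 'I_r -> 'I_n),
    injective f -> injective g -> `|\det (mxsub f g A)| <= Delta%:Z.

Definition in_M2 (T : finType) (I : {set T} -> bool) : Prop :=
  exists (m n : nat) (A : 'M[int]_(m, n)),
    Delta_modular 2 A /\ matroid_iso I (@real_vector_matroid m n A).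

Definition uniform_matroid (r n : nat) (X : {set 'I_n}) : bool := (#|X| <= r)%N.

Definition direct_sum (T1 T2 : finType) (I1 : {set T1} -> bool)
  (I2 : {set T2} -> bool) (X : {set T1 + T2}) : bool :=
  I1 [set x | inl x \in X] && I2 [set y | inr y \in X].

(* Minor M / C \ D on the ground set T - (C u D): a set X is independent iff
   X u B is independent in M for a basis (maximal independent subset) B of C. *)
Definition minor_ground (T : finType) (C D : {set T}) :=
  {x : T | x \notin C :|: D}.

Definition minor (T : finType) (I : {set T} -> bool) (C D : {set T})
  (X : {set minor_ground C D}) : bool :=
  [exists B : {set T},
     [&& B \subset C, I B,
         [forall B' : {set T}, [&& B \subset B', B' \subset C & I B'] ==> (B' == B)]
       & I ((fun x : minor_ground C D => val x) @: X :|: B)]].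

Definition U24_plus_U24 : {set 'I_4 + 'I_4} -> bool :=
  direct_sum (@uniform_matroid 2%N 4%N) (@uniform_matroid 2%N 4%N).

Arguments minor [T] I C D X.

From HB Require Import structures.
From mathcomp Require Import all_boot all_order all_algebra.
From mathcomp Require Import ring zify.
From mathcomp Require Import Rstruct.
Set Implicit Arguments. Unset Strict Implicit. Unset Printing Implicit Defensive.
Import Order.TTheory GRing.Theory Num.Theory.
Local Open Scope ring_scope.

(** A 2-modular representation of U24 (+) U24 has rank
    4; restricted to four spanning rows, the 4x4 minor on columns
    {a, b | t, u} (a, b from the first copy, t, u from the second) has
    absolute value 1 or 2 when a <> b and t <> u, and vanishes on every other
    4-set.  The three-term Grassmann-Pluecker relations then force
    |det(a, b | t, u)| = f(a, b) g(t, u).  A three-term Pluecker relation whose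
    six terms all have the same absolute value cannot hold, so f takes both
    values 1 and 2; then |det(a, b | t, u)| = 2 for all t, u whenever
    f(a, b) = 2, and the Pluecker relation in the second copy fails.

    Each side of a proper minor is a
    uniform matroid of rank at most 2, represented on its own two coordinates
    by columns chosen among 0, e, f, e + f, e - f.  As C :|: D is nonempty, one
    side keeps at most three elements and never uses e - f, and then every
    square submatrix has determinant of absolute value at most 2, which is
    checked by computation. *)

Notation mxR := (map_mx (intr : int -> Rdefinitions.R)).

Section RowRank.
Variable F : fieldType.

Definition rows_rank n p (N : 'M[F]_(n, p)) (Y : {set 'I_n}) :=
  \rank (rowsub (fun i : 'I_#|Y| => enum_val i) N).

Lemma rowsub_submx p n k k' (N : 'M[F]_(n, p)) (g : 'I_k -> 'I_n) (h : 'I_k' -> 'I_n) :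
  (forall i, exists i', g i = h i') -> (rowsub g N <= rowsub h N)%MS.
Proof.
move=> gh; apply/row_subP => i; rewrite row_rowsub; have [i' ->] := gh i.
by rewrite -row_rowsub row_sub.
Qed.

Lemma rank_rowsub_imset n p k (N : 'M[F]_(n, p)) (g : 'I_k -> 'I_n) :
  \rank (rowsub g N) = rows_rank N [set g i | i in 'I_k].
Proof.
apply/eqP; rewrite eqn_leq !mxrankS //; apply: rowsub_submx.
  by move=> i'; have /imsetP[i _ ->] := enum_valP i'; exists i.
move=> i; have gi : g i \in [set g i | i in 'I_k] by apply: imset_f.
by exists (enum_rank_in gi (g i)); rewrite enum_rankK_in.
Qed.

Lemma rows_rank_leq n p (N : 'M[F]_(n, p)) Y : (rows_rank N Y <= #|Y|)%N.
Proof. exact: rank_leq_row. Qed.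

Lemma mxrank_mxsub_spanning m n k r (B : 'M[F]_(m, n)) (rsel : 'I_r -> 'I_m)
    (g : 'I_k -> 'I_n) :
  (B <= rowsub rsel B)%MS -> \rank (mxsub rsel g B) = \rank (rowsub g B^T).
Proof.
move=> /submxP[K BK]; rewrite -mxrank_tr trmx_mxsub.
apply/eqP; rewrite eqn_leq; apply/andP; split.
  by rewrite mxsubcr -{1}[rowsub g _]mulmx1 -mulmx_colsub mxrankM_maxl.
have -> : rowsub g B^T = mxsub g rsel B^T *m K^T.
  by rewrite {1}BK trmx_mul -mul_rowsub_mx trmx_mxsub -mxsubrc.
exact: mxrankM_maxl.
Qed.

Lemma row_free_mul0P k p (V : 'M[F]_(k, p)) :
  reflect (forall v : 'rV_k, v *m V = 0 -> v = 0) (row_free V).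
Proof.
apply: (iffP idP) => [/row_free_inj Vinj v vV0|V0].
  by apply: Vinj; rewrite vV0 mul0mx.
rewrite -kermx_eq0; apply/eqP/row_matrixP => i.
by rewrite row0; apply: V0; apply/sub_kermxP; rewrite row_sub.
Qed.

End RowRank.

Lemma real_vector_matroidE m n (A : 'M[int]_(m, n)) (Y : {set 'I_n}) :
  real_vector_matroid A Y = (rows_rank (mxR A)^T Y == #|Y|).
Proof. by rewrite /real_vector_matroid /rows_rank -mxrank_tr trmx_mxsub. Qed.

Section DetFormulas.
Variable R : comNzRingType.
Implicit Type B : nat -> nat -> R.

Definition det2f B := B 0 0 * B 1 1 - B 0 1 * B 1 0.

Definition det3f B :=
  B 0 0 * (B 1 1 * B 2 2 - B 1 2 * B 2 1)
  - B 0 1 * (B 1 0 * B 2 2 - B 1 2 * B 2 0)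
  + B 0 2 * (B 1 0 * B 2 1 - B 1 1 * B 2 0).

Definition det4f B :=
    B 0 0 * (B 1 1 * (B 2 2 * B 3 3 - B 2 3 * B 3 2) - B 1 2 * (B 2 1 * B 3 3 - B 2 3 * B 3 1) + B 1 3 * (B 2 1 * B 3 2 - B 2 2 * B 3 1))
  - B 0 1 * (B 1 0 * (B 2 2 * B 3 3 - B 2 3 * B 3 2) - B 1 2 * (B 2 0 * B 3 3 - B 2 3 * B 3 0) + B 1 3 * (B 2 0 * B 3 2 - B 2 2 * B 3 0))
  + B 0 2 * (B 1 0 * (B 2 1 * B 3 3 - B 2 3 * B 3 1) - B 1 1 * (B 2 0 * B 3 3 - B 2 3 * B 3 0) + B 1 3 * (B 2 0 * B 3 1 - B 2 1 * B 3 0))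
  - B 0 3 * (B 1 0 * (B 2 1 * B 3 2 - B 2 2 * B 3 1) - B 1 1 * (B 2 0 * B 3 2 - B 2 2 * B 3 0) + B 1 2 * (B 2 0 * B 3 1 - B 2 1 * B 3 0)).

Lemma det2E (A : 'M[R]_2) B : (forall i j : 'I_2, A i j = B i j) -> \det A = det2f B.
Proof.
move=> AB; rewrite (expand_det_row _ 0) !big_ord_recl big_ord0 /cofactor.
by rewrite !det_mx11 !mxE !AB /det2f /=; ring.
Qed.

Lemma det3E (A : 'M[R]_3) B : (forall i j : 'I_3, A i j = B i j) -> \det A = det3f B.
Proof.
move=> AB; have d2 (M : 'M[R]_2) := @det2E M (fun a b => M (inord a) (inord b))
  (fun i j => congr2 M (esym (inord_val i)) (esym (inord_val j))).
rewrite (expand_det_row _ 0) !big_ord_recl big_ord0 /cofactor !d2 /det2f.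
by rewrite !mxE !AB /det3f /= !inordK //=; ring.
Qed.

Lemma det4E (A : 'M[R]_4) B : (forall i j : 'I_4, A i j = B i j) -> \det A = det4f B.
Proof.
move=> AB; have d3 (M : 'M[R]_3) := @det3E M (fun a b => M (inord a) (inord b))
  (fun i j => congr2 M (esym (inord_val i)) (esym (inord_val j))).
rewrite (expand_det_row _ 0) !big_ord_recl big_ord0 /cofactor !d3 /det3f.
by rewrite !mxE !AB /det4f /= !inordK //=; ring.
Qed.

Definition detf r B :=
  match r with
  | 0%N => 1 | 1%N => B 0%N 0%N | 2%N => det2f B | 3%N => det3f B | _ => det4f B
  end.

Lemma detfE r (A : 'M[R]_r) B :
  (r <= 4)%N -> (forall i j : 'I_r, A i j = B i j) -> \det A = detf r B.
Proof.
case: r A => [|[|[|[|[|r]]]]] A // _ AB; rewrite /detf.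
- by rewrite det_mx00.
- by rewrite det_mx11 AB.
- exact: det2E.
- exact: det3E.
- exact: det4E.
Qed.

Definition cols4 (c0 c1 c2 c3 : nat -> R) : nat -> nat -> R :=
  fun i j => (match j with 0 => c0 | 1 => c1 | 2 => c2 | _ => c3 end)%N i.

Local Notation D4 c0 c1 c2 c3 := (det4f (cols4 c0 c1 c2 c3)).

Lemma det4f_swap01 c0 c1 c2 c3 : D4 c1 c0 c2 c3 = - D4 c0 c1 c2 c3.
Proof. by rewrite /det4f /cols4 /=; ring. Qed.

Lemma det4f_swap12 c0 c1 c2 c3 : D4 c0 c2 c1 c3 = - D4 c0 c1 c2 c3.
Proof. by rewrite /det4f /cols4 /=; ring. Qed.

Lemma det4f_swap23 c0 c1 c2 c3 : D4 c0 c1 c3 c2 = - D4 c0 c1 c2 c3.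
Proof. by rewrite /det4f /cols4 /=; ring. Qed.

Lemma det4f_swap_pairs c0 c1 c2 c3 : D4 c2 c3 c0 c1 = D4 c0 c1 c2 c3.
Proof. by rewrite /det4f /cols4 /=; ring. Qed.

Lemma det4f_plucker p q i j k l :
  D4 p q i j * D4 p q k l - D4 p q i k * D4 p q j l + D4 p q i l * D4 p q j k = 0.
Proof. by rewrite /det4f /cols4 /=; ring. Qed.

End DetFormulas.

Lemma plucker3_neq0 (c y1 y2 y3 y4 y5 y6 : int) : c != 0 ->
    `|y1| = c -> `|y2| = c -> `|y3| = c -> `|y4| = c -> `|y5| = c -> `|y6| = c ->
  y1 * y2 - y3 * y4 + y5 * y6 != 0.
Proof.
move=> c0 h1 h2 h3 h4 h5 h6.
have sgn y : `|y| = c -> y = c \/ y = - c by lia.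
have sq y z : `|y| = c -> `|z| = c -> y * z = c ^+ 2 \/ y * z = - c ^+ 2.
  by move=> /sgn[->|->] /sgn[->|->]; rewrite ?mulrN ?mulNr ?opprK -expr2; auto.
have : c ^+ 2 != 0 by rewrite expf_neq0.
set d := c ^+ 2 => d0.
by have [->|->] := sq _ _ h1 h2; have [->|->] := sq _ _ h3 h4;
  have [->|->] := sq _ _ h5 h6; lia.
Qed.

Definition o0 : 'I_4 := @Ordinal 4 0 isT.
Definition o1 : 'I_4 := @Ordinal 4 1 isT.
Definition o2 : 'I_4 := @Ordinal 4 2 isT.
Definition o3 : 'I_4 := @Ordinal 4 3 isT.

(* [E a b t u] plays the role of the 4x4 minor on columns {a, b | t, u}. *)
Section PluckerBrackets.
Variable E : 'I_4 -> 'I_4 -> 'I_4 -> 'I_4 -> int.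
Hypothesis E_swapl : forall a b t u, E b a t u = - E a b t u.
Hypothesis E_swapr : forall a b t u, E a b u t = - E a b t u.
Hypothesis E_range :
  forall a b t u, a != b -> t != u -> E a b t u != 0 /\ `|E a b t u| <= 2.
Hypothesis E_exchange :
  forall a b c t u v, E a b t v * E a c t u = E a b t u * E a c t v.
Hypothesis E_pluckerl : forall t u,
  E o0 o1 t u * E o2 o3 t u - E o0 o2 t u * E o1 o3 t u + E o0 o3 t u * E o1 o2 t u = 0.
Hypothesis E_pluckerr : forall a b,
  E a b o0 o1 * E a b o2 o3 - E a b o0 o2 * E a b o1 o3 + E a b o0 o3 * E a b o1 o2 = 0.

Local Notation nE a b t u := `|E a b t u|.

Let nE_swapl a b t u : nE b a t u = nE a b t u.
Proof. by rewrite E_swapl normrN. Qed.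

Let nE_swapr a b t u : nE a b u t = nE a b t u.
Proof. by rewrite E_swapr normrN. Qed.

Let nE_neq0 a b t u : a != b -> t != u -> nE a b t u != 0.
Proof. by move=> ab tu; rewrite normr_eq0; have [] := E_range ab tu. Qed.

Let nE_range a b t u : a != b -> t != u -> 1 <= nE a b t u <= 2.
Proof. by move=> ab tu; have [] := E_range ab tu; lia. Qed.

Let nE_exchange a b c t u v : nE a b t v * nE a c t u = nE a b t u * nE a c t v.
Proof. by rewrite -!normrM E_exchange. Qed.

Let nE_cross_row a b c t u v w : a != b -> a != c -> t != u -> v != w ->
  nE a b t u * nE a c v w = nE a b v w * nE a c t u.
Proof.
move=> ab ac tu vw; have [<-|tv] := eqVneq t v; first by rewrite nE_exchange.
apply: (mulIf (mulf_neq0 (nE_neq0 ab tv) (nE_neq0 ac tv))).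
have R1 := nE_exchange a b c t u v.
have R2 := nE_exchange a b c v w t; rewrite (nE_swapr a b t v) (nE_swapr a c t v) in R2.
transitivity ((nE a b t u * nE a c t v) * (nE a b t v * nE a c v w)); first by ring.
by rewrite -R1 R2; ring.
Qed.

(* |E| factors as f(a, b) * g(t, u). *)
Let nE_cross a b c d t u v w : a != b -> c != d -> t != u -> v != w ->
  nE a b t u * nE c d v w = nE a b v w * nE c d t u.
Proof.
move=> ab cd tu vw; have [ac|ac] := eqVneq a c; first by subst c; apply: nE_cross_row.
have S1 := nE_cross_row ab ac tu vw.
have S2 : nE c a t u * nE c d v w = nE c a v w * nE c d t u.
  by apply: nE_cross_row; rewrite // eq_sym.
apply: (mulIf (mulf_neq0 (nE_neq0 ac tu) (nE_neq0 ac vw))).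
transitivity ((nE a b t u * nE a c v w) * (nE a c t u * nE c d v w)); first by ring.
by rewrite S1 -(nE_swapl a c t u) -(nE_swapl a c v w) S2; ring.
Qed.

Lemma plucker_brackets_false : False.
Proof.
have nonconst c : c != 0 ->
    [exists a, exists b, (a != b) && (nE a b o0 o1 != c)].
  move=> c0; apply: contraT; rewrite negb_exists => /forallP allc.
  have {}allc a b : a != b -> nE a b o0 o1 = c.
    move=> ab; apply/eqP; move: (allc a).
    by rewrite negb_exists => /forallP/(_ b); rewrite ab negbK.
  exfalso; have := E_pluckerl o0 o1; apply/eqP.
  by apply: (plucker3_neq0 c0); apply: allc.
have [a1 [b1 [ab1 n1]]] : exists a b, a != b /\ nE a b o0 o1 = 2.
  have /existsP[a /existsP[b /andP[ab nab]]] := nonconst 1 isT.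
  by exists a, b; split=> //; have := nE_range ab (isT : o0 != o1); lia.
have [a2 [b2 [ab2 n2]]] : exists a b, a != b /\ nE a b o0 o1 = 1.
  have /existsP[a /existsP[b /andP[ab nab]]] := nonconst 2 isT.
  by exists a, b; split=> //; have := nE_range ab (isT : o0 != o1); lia.
have all2 t u : t != u -> nE a1 b1 t u = 2.
  move=> tu; have := nE_cross ab1 ab2 tu (isT : o0 != o1); rewrite n1 n2.
  by have := nE_range ab1 tu; have := nE_range ab2 tu; lia.
by have := E_pluckerr a1 b1; apply/eqP; apply: (plucker3_neq0 (isT : 2 != 0 :> int));
  apply: all2.
Qed.

End PluckerBrackets.

Notation T4 := ('I_4 + 'I_4)%type.

Definition elem (s : bool) (a : 'I_4) : T4 := if s then inr a else inl a.
Definition side_of (x : T4) : bool := if x is inr _ then true else false.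
Definition ord_of (x : T4) : 'I_4 := match x with inl a | inr a => a end.
Definition part (s : bool) (Z : {set T4}) : {set 'I_4} := [set a | elem s a \in Z].

Lemma elem_sideK x : elem (side_of x) (ord_of x) = x.
Proof. by case: x. Qed.

Lemma elem_side s a : side_of (elem s a) = s.
Proof. by case: s. Qed.

Lemma elem_inj s : injective (elem s).
Proof. by case: s => a b [->]. Qed.

Lemma elem_eq s a b : (elem s a == elem s b) = (a == b).
Proof. by rewrite (inj_eq (@elem_inj s)). Qed.

Lemma elem_eq_other s a b : (elem (~~ s) a == elem s b) = false.
Proof. by case: s. Qed.

Lemma partE s Z a : (a \in part s Z) = (elem s a \in Z).
Proof. by rewrite inE. Qed.

Lemma U24_plus_U24E Z :
  U24_plus_U24 Z = (#|part false Z| <= 2)%N && (#|part true Z| <= 2)%N.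
Proof. by []. Qed.

Lemma card_part (Z : {set T4}) : #|Z| = (#|part false Z| + #|part true Z|)%N.
Proof.
have elem_other a s (S : {set 'I_4}) : (elem (~~ s) a \in elem s @: S) = false.
  by apply/imsetP => -[b _ /eqP]; rewrite elem_eq_other.
have Zsplit : Z = elem false @: part false Z :|: elem true @: part true Z.
  apply/setP => x; rewrite -[x]elem_sideK in_setU.
  by case: (side_of x); rewrite ?(elem_other _ true) ?(elem_other _ false)
    (mem_imset _ _ (@elem_inj _)) ?orbF ?orFb partE.
rewrite {1}Zsplit cardsU !(card_imset _ (@elem_inj _)).
suff -> : elem false @: part false Z :&: elem true @: part true Z = set0.
  by rewrite cards0 subn0.
apply/setP => x; rewrite -[x]elem_sideK in_setI in_set0.
by case: (side_of x); rewrite ?(elem_other _ true) ?(elem_other _ false) ?andbF.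
Qed.

Lemma imset_tnth4 (x0 x1 x2 x3 : T4) :
  [set tnth [tuple x0; x1; x2; x3] i | i : 'I_4] = [set x0; x1; x2; x3].
Proof.
apply/setP => y; rewrite !inE; apply/imsetP/idP.
  by case=> -[[|[|[|[|i]]]] Hi] //= _ ->; rewrite /tnth /= eqxx ?orbT.
by case/orP => [/orP[/orP[]|]|] /eqP ->; [exists o0|exists o1|exists o2|exists o3].
Qed.

Lemma imset_tnth5 (x0 x1 x2 x3 x4 : T4) :
  [set tnth [tuple x0; x1; x2; x3; x4] i | i : 'I_5] = x4 |: [set x0; x1; x2; x3].
Proof.
apply/setP => y; rewrite !inE; apply/imsetP/idP.
  by case=> -[[|[|[|[|[|i]]]]] Hi] //= _ ->; rewrite /tnth /= eqxx ?orbT.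
case/orP => [/eqP ->|]; first by exists (@Ordinal 5 4 isT).
by case/orP => [/orP[/orP[]|]|] /eqP ->; [exists (@Ordinal 5 0 isT)|
  exists (@Ordinal 5 1 isT)|exists (@Ordinal 5 2 isT)|exists (@Ordinal 5 3 isT)].
Qed.

Lemma part_set4l (a b t u : 'I_4) :
  part false [set inl a; inl b; inr t; inr u] = [set a; b].
Proof. by apply/setP => x; rewrite !inE /= !orbF. Qed.

Lemma part_set4r (a b t u : 'I_4) :
  part true [set inl a; inl b; inr t; inr u] = [set t; u].
Proof. by apply/setP => x; rewrite !inE. Qed.

Section NotRepresentable.
Variables (m n : nat) (A : 'M[int]_(m, n)) (phi : T4 -> 'I_n).
Hypothesis phi_bij : bijective phi.
Hypothesis phiA : forall X, U24_plus_U24 X = real_vector_matroid A (phi @: X).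
Local Notation B := (mxR A).

Let phi_inj : injective phi := bij_inj phi_bij.

Lemma U24_plus_U24_rank Z : U24_plus_U24 Z = (rows_rank B^T (phi @: Z) == #|Z|).
Proof. by rewrite phiA real_vector_matroidE card_imset. Qed.

Lemma rank_phi_rowsub k (xs : 'I_k -> T4) :
  \rank (rowsub (phi \o xs) B^T) = rows_rank B^T (phi @: [set xs i | i : 'I_k]).
Proof. by rewrite rank_rowsub_imset -imset_comp. Qed.

(* A basis {0, 1 | 0, 1} spans, since adding any fifth element gives a
   dependent set. *)
Lemma rank_U24_plus_U24_rep : \rank B = 4%N.
Proof.
pose xs0 := tnth [tuple inl o0; inl o1; inr o0; inr o1].
pose Z0 : {set T4} := [set inl o0; inl o1; inr o0; inr o1].
have cardZ0 : #|Z0| = 4%N by rewrite card_part part_set4l part_set4r !cards2.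
have rankZ0 : \rank (rowsub (phi \o xs0) B^T) = 4%N.
  have := U24_plus_U24_rank Z0.
  by rewrite U24_plus_U24E part_set4l part_set4r !cards2 cardZ0 rank_phi_rowsub imset_tnth4 => /esym/eqP.
rewrite -mxrank_tr -rankZ0; apply/eqP.
rewrite eqn_leq (mxrankS (rowsub_sub _ _)) andbT; apply: mxrankS.
apply/row_subP => j.
have [psi _ phiK] := phi_bij; have -> : j = phi (psi j) by rewrite phiK.
have [/imsetP[i _ ->]|Z0x] := boolP (psi j \in [set xs0 i | i : 'I_4]).
  by rewrite -(row_rowsub (phi \o xs0)) row_sub.
rewrite imset_tnth4 -/Z0 in Z0x.
pose xs5 := tnth [tuple inl o0; inl o1; inr o0; inr o1; psi j].
have sub05 : (rowsub (phi \o xs0) B^T <= rowsub (phi \o xs5) B^T)%MS.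
  by apply: rowsub_submx => -[[|[|[|[|i]]]] Hi] //; exists (widen_ord (leqnSn 4) (Ordinal Hi)).
have rank5 : (\rank (rowsub (phi \o xs5) B^T) <= 4)%N.
  have card5 : #|psi j |: Z0| = 5%N by rewrite cardsU1 Z0x cardZ0.
  have notU : ~~ U24_plus_U24 (psi j |: Z0).
    by rewrite U24_plus_U24E; move: card5; rewrite card_part; lia.
  have := U24_plus_U24_rank (psi j |: Z0); rewrite (negbTE notU) card5 => /esym/eqP.
  have := rows_rank_leq B^T (phi @: (psi j |: Z0)); rewrite card_imset // card5.
  rewrite rank_phi_rowsub imset_tnth5 -/Z0 => le5 ne5.
  by rewrite -ltnS ltn_neqAle le5 andbT; apply/eqP.
have eq05 : (rowsub (phi \o xs5) B^T <= rowsub (phi \o xs0) B^T)%MS.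
  by have [le05 <-] := mxrank_leqif_sup sub05; apply/eqP; lia.
apply: submx_trans eq05; rewrite -[phi (psi j)]/((phi \o xs5) (@Ordinal 5 4 isT)).
by rewrite -row_rowsub row_sub.
Qed.

Section SpanningRows.
Variable rsel : 'I_4 -> 'I_m.
Hypothesis rsel_span : (B <= rowsub rsel B)%MS.
Hypothesis rsel_2modular :
  forall g : 'I_4 -> 'I_n, injective g -> `|\det (mxsub rsel g A)| <= 2.

Definition subdet4 (xs : 'I_4 -> T4) : int := \det (mxsub rsel (phi \o xs) A).

Lemma subdet4_neq0 xs : (subdet4 xs != 0) =
  (#|[set xs i | i : 'I_4]| == 4)%N && U24_plus_U24 [set xs i | i : 'I_4].
Proof.
rewrite -(intr_eq0 Rdefinitions.R) /subdet4 -det_map_mx map_mxsub -unitfE.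
rewrite -unitmxE -row_free_unit /row_free mxrank_mxsub_spanning //.
rewrite rank_phi_rowsub U24_plus_U24_rank.
have := rows_rank_leq B^T (phi @: [set xs i | i : 'I_4]).
have : (#|[set xs i | i : 'I_4]| <= 4)%N.
  by rewrite (leq_trans (leq_imset_card _ _)) // card_ord.
rewrite (card_imset _ phi_inj) => c_le4 r_lec.
have [c4|c_ne4] := eqVneq #|[set xs i | i : 'I_4]| 4%N; first by rewrite c4.
rewrite andFb; apply: contraNF c_ne4 => /eqP r4.
by rewrite r4 in r_lec; rewrite eqn_leq c_le4 r_lec.
Qed.

Lemma subdet4_bound xs : `|subdet4 xs| <= 2.
Proof.
have [->|nz] := eqVneq (subdet4 xs) 0; first by rewrite normr0.
apply: rsel_2modular; apply: inj_comp phi_inj _.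
move: nz; rewrite subdet4_neq0 => /andP[/eqP card4 _].
have /imset_injP xs_inj : #|[set xs i | i : 'I_4]| == #|'I_4| by rewrite card4 card_ord.
by move=> x y; apply: xs_inj.
Qed.

Definition col (x : T4) (i : nat) : int := A (rsel (inord i)) (phi x).

Definition bracket a b t u : int :=
  subdet4 (tnth [tuple inl a; inl b; inr t; inr u]).

Lemma subdet4_tupleE x0 x1 x2 x3 : subdet4 (tnth [tuple x0; x1; x2; x3]) =
  det4f (cols4 (col x0) (col x1) (col x2) (col x3)).
Proof.
rewrite /subdet4 (det4E (B := cols4 (col x0) (col x1) (col x2) (col x3))) // => i j.
by rewrite mxE /col /cols4 /=; case: j => [[|[|[|[|j]]]] Hj] //=; rewrite inord_val.
Qed.

Lemma bracket_neq0 a b t u : a != b -> t != u -> bracket a b t u != 0.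
Proof.
move=> ab tu; rewrite subdet4_neq0 imset_tnth4 U24_plus_U24E card_part.
by rewrite part_set4l part_set4r !cards2 ab tu.
Qed.

Lemma subdet4_3inl a t b c : subdet4 (tnth [tuple inl a; inr t; inl b; inl c]) = 0.
Proof.
apply/eqP; apply: contraT; rewrite subdet4_neq0 imset_tnth4 U24_plus_U24E card_part.
have -> : part true [set inl a; inr t; inl b; inl c] = [set t].
  by apply/setP => x; rewrite !inE !orbF.
by rewrite cards1; lia.
Qed.

Lemma spanning_rows_false : False.
Proof.
apply: (@plucker_brackets_false bracket).
- by move=> a b t u; rewrite /bracket !subdet4_tupleE det4f_swap01.
- by move=> a b t u; rewrite /bracket !subdet4_tupleE det4f_swap23.
- by move=> a b t u ab tu; split; [apply: bracket_neq0|apply: subdet4_bound].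
- move=> a b c t u v; rewrite /bracket !subdet4_tupleE.
  have := det4f_plucker (col (inl a)) (col (inr t)) (col (inl b)) (col (inl c))
    (col (inr v)) (col (inr u)).
  rewrite -subdet4_tupleE subdet4_3inl mul0r sub0r.
  rewrite !(det4f_swap12 (col (inl a)) (col (inr t))) !mulrNN.
  by move/eqP; rewrite addrC subr_eq0 => /eqP ->.
- move=> t u; have := det4f_plucker (col (inr t)) (col (inr u))
    (col (inl o0)) (col (inl o1)) (col (inl o2)) (col (inl o3)).
  by rewrite /bracket !subdet4_tupleE !(det4f_swap_pairs _ _ (col (inr t))).
- move=> a b; rewrite /bracket !subdet4_tupleE; exact: det4f_plucker.
Qed.

End SpanningRows.
End NotRepresentable.

Lemma U24_plus_U24_notin_M2 : ~ in_M2 U24_plus_U24.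
Proof.
case=> m [n [A [A2mod [phi [phi_bij phiA]]]]].
have rank4 := rank_U24_plus_U24_rep phi_bij phiA.
move: (maxrankfun (mxR A)) (@maxrankfun_inj _ _ _ (mxR A)) (eq_maxrowsub (mxR A)).
rewrite rank4 => rsel rsel_inj rsel_span.
apply: (spanning_rows_false phi_bij phiA (rsel := rsel)).
  by rewrite rsel_span submx_refl.
move: A2mod; rewrite /Delta_modular /= rank4 => A2mod g g_inj.
exact: A2mod.
Qed.

(* Column codes: 1, 2, 3, 4 stand for e0, e1, e0 + e1, e0 - e1 and 5, 6, 7, 8
   for e2, e3, e2 + e3, e2 - e3; any other code is the zero column. *)
Definition rep_col (c p : nat) : int :=
  match c, p with
  | 1%N, 0%N | 2%N, 1%N | 3%N, 0%N | 3%N, 1%N | 4%N, 0%N => 1 | 4%N, 1%N => -1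
  | 5%N, 2%N | 6%N, 3%N | 7%N, 2%N | 7%N, 3%N | 8%N, 2%N => 1 | 8%N, 3%N => -1
  | _, _ => 0
  end.

(* Code of the element of index [i] on side [s] (coordinates 0, 1 for the
   first copy of U24, 2, 3 for the second) of a uniform matroid of rank [r]. *)
Definition side_code (r : nat) (s : bool) (i : nat) : nat :=
  (if r == 0 then 0 else (if s then 5 else 1) + (if r == 1 then 0 else minn i 3))%N.

Definition side_offset (s : bool) : nat := if s then 2 else 0.

Definition side_entry (r i q : nat) : int := rep_col (side_code r false i) q.

Lemma rep_col_other_side r s i (p : nat) :
  (p < 4)%N -> (p < 2)%N = s -> rep_col (side_code r s i) p = 0.
Proof.
rewrite /side_code; case: r => [|[|r]]; case: s; case: i => [|[|[|i]]];
  by case: p => [|[|[|[|p]]]].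
Qed.

Lemma rep_col_side r s i q :
  (q < 2)%N -> rep_col (side_code r s i) (side_offset s + q) = side_entry r i q.
Proof.
rewrite /side_entry /side_code /side_offset; case: r => [|[|r]]; case: s;
  by case: i => [|[|[|i]]]; case: q => [|[|q]].
Qed.

Lemma side_entry_eq1 r i : (0 < r)%N -> exists2 q, (q < 2)%N & side_entry r i q = 1.
Proof.
rewrite /side_entry /side_code; case: r => [|[|r]] // _; first by exists 0%N.
by case: i => [|[|[|i]]]; [exists 0%N|exists 1%N|exists 0%N|exists 0%N].
Qed.

Lemma side_entry_det_neq0 i j : (i < 4)%N -> (j < 4)%N -> i != j ->
  side_entry 2 i 0 * side_entry 2 j 1 - side_entry 2 i 1 * side_entry 2 j 0 != 0.
Proof. by case: i => [|[|[|[|i]]]] //; case: j => [|[|[|[|j]]]]. Qed.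

Lemma cramer2 (F : fieldType) (u v x0 x1 y0 y1 : F) : x0 * y1 - x1 * y0 != 0 ->
  u * x0 + v * y0 = 0 -> u * x1 + v * y1 = 0 -> u = 0.
Proof.
move=> det0 E0 E1; have : u * (x0 * y1 - x1 * y0) = 0.
  transitivity (y1 * (u * x0 + v * y0) - y0 * (u * x1 + v * y1)); first by ring.
  by rewrite E0 E1; ring.
by move/eqP; rewrite mulf_eq0 (negbTE det0) orbF => /eqP.
Qed.

Section SupportSums.
Variables (I : finType) (V : nmodType) (F : I -> V).

Lemma big_supp2 i0 i1 : i1 != i0 ->
  (forall i, i != i0 -> i != i1 -> F i = 0) -> \sum_i F i = F i0 + F i1.
Proof.
move=> i10 F0; rewrite (bigD1 i0) //= (bigD1 i1) //= big1 ?addr0 //.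
by move=> i /andP[]; apply: F0.
Qed.

Lemma big_supp3 i0 i1 i2 : i1 != i0 -> i2 != i0 -> i2 != i1 ->
    (forall i, i != i0 -> i != i1 -> i != i2 -> F i = 0) ->
  \sum_i F i = F i0 + F i1 + F i2.
Proof.
move=> i10 i20 i21 F0; rewrite (bigD1 i0) //= (bigD1 i1) //= (bigD1 i2) /= ?i20 ?i21 //.
by rewrite big1 ?addr0 ?addrA // => i /andP[/andP[]]; apply: F0.
Qed.

End SupportSums.

(* Rows of a matrix built from side codes: [side i] is the side of row [i],
   [idx i] its index on that side and [rk s] the rank of side [s]. *)
Section SideCodeRows.
Variables (k : nat) (side : 'I_k -> bool) (idx : 'I_k -> nat) (rk : bool -> nat).
Hypothesis rk_le2 : forall s, (rk s <= 2)%N.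
Hypothesis idx_inj : forall i j, i != j -> side i = side j -> idx i != idx j.
Hypothesis idx_lt4 : forall i, (idx i < 4)%N.
Variable V : 'M[Rdefinitions.R]_(k, 4).
Hypothesis VE :
  forall i p, V i p = (rep_col (side_code (rk (side i)) (side i) (idx i)) p)%:~R.

Local Notation on_side s := [set i | side i == s].

Definition side_coord (s : bool) (q : nat) : 'I_4 := inord (side_offset s + q).

Lemma side_coordE s q : (q < 2)%N -> side_coord s q = side_offset s + q :> nat.
Proof. by move=> q2; rewrite /side_coord inordK // /side_offset; case: s; lia. Qed.

Lemma side_coordP (p : 'I_4) :
  exists2 q, (q < 2)%N & p = side_coord (2 <= p)%N q.
Proof.
have q2 : (p - side_offset (2 <= p) < 2)%N by case: p => [[|[|[|[|p]]]] ?].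
exists (p - side_offset (2 <= p))%N => //.
by apply: val_inj; rewrite /= side_coordE //; case: p q2 => [[|[|[|[|p]]]] ?].
Qed.

Lemma V_side_coord i s q : (q < 2)%N ->
  V i (side_coord s q) = if side i == s then (side_entry (rk s) (idx i) q)%:~R else 0.
Proof.
move=> q2; rewrite VE side_coordE //; case: eqP => [<-|/eqP si].
  by rewrite rep_col_side.
rewrite rep_col_other_side // /side_offset; first by case: s {si}; lia.
by case: s si; case: (side i) => //= _; lia.
Qed.

Lemma mulmx_side_coord (v : 'rV_k) s q : (q < 2)%N ->
  (v *m V) 0 (side_coord s q) =
  \sum_(i in on_side s) v 0 i * (side_entry (rk s) (idx i) q)%:~R.
Proof.
move=> q2; rewrite mxE [RHS]big_mkcond; apply: eq_bigr => i _.
by rewrite V_side_coord // inE; case: eqP; rewrite ?mulr0.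
Qed.


Lemma side_rows_free :
  (forall s, (#|on_side s| <= rk s)%N) -> forall v : 'rV_k, v *m V = 0 -> v = 0.
Proof.
move=> card_le v vV0; apply/rowP => i0; rewrite mxE.
set s := side i0.
have i0s : i0 \in on_side s by rewrite inE.
have eqn q : (q < 2)%N ->
    \sum_(i in on_side s) v 0 i * (side_entry (rk s) (idx i) q)%:~R = 0.
  by move=> q2; rewrite -mulmx_side_coord // vV0 mxE.
have [/existsP[i1 /andP[i1s i10]]|alone] :=
  boolP [exists i1, (i1 \in on_side s) && (i1 != i0)].
  have si1 : side i1 = s by move: i1s; rewrite inE => /eqP.
  have rk2 : rk s = 2%N.
    have : (1 < #|on_side s|)%N by apply/card_gt1P; exists i0, i1; rewrite eq_sym.
    by have := rk_le2 s; have := card_le s; lia.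
  have pair : on_side s = [set i0; i1].
    apply/eqP; rewrite eq_sym eqEcard cards2 eq_sym i10 -rk2 card_le andbT.
    by apply/subsetP => i; rewrite !inE => /orP[]/eqP->; rewrite ?si1.
  have E q : (q < 2)%N -> v 0 i0 * (side_entry 2 (idx i0) q)%:~R
                         + v 0 i1 * (side_entry 2 (idx i1) q)%:~R = 0.
    by move=> q2; rewrite -(eqn q q2) pair big_setU1 ?big_set1 ?rk2 // inE eq_sym.
  apply: (cramer2 _ (E 0%N isT) (E 1%N isT)).
  rewrite -!intrM -intrB intr_eq0; apply: side_entry_det_neq0; rewrite ?idx_lt4 //.
  by apply: idx_inj; rewrite 1?eq_sym ?si1.
have single : on_side s = [set i0].
  apply/setP => i; rewrite !inE; apply/idP/idP => [si|/eqP->//].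
  by apply: contraNT alone => ii0; apply/existsP; exists i; rewrite inE si.
have [q q2 e1] : exists2 q, (q < 2)%N & side_entry (rk s) (idx i0) q = 1.
  by apply: side_entry_eq1; rewrite (leq_trans _ (card_le s)) // single cards1.
by have := eqn q q2; rewrite single big_set1 e1 mulr1.
Qed.

Lemma side_support_mulmx s (w : 'I_k -> Rdefinitions.R) :
    (forall i, side i != s -> w i = 0) ->
    (forall q, (q < 2)%N -> \sum_i w i * (side_entry (rk s) (idx i) q)%:~R = 0) ->
  (\row_i w i) *m V = 0.
Proof.
move=> w0 wq; apply/rowP => p; have [q q2 ->] := side_coordP p.
rewrite mulmx_side_coord // mxE; under eq_bigr do rewrite mxE.
case: (eqVneq (2 <= p)%N s) => [->|ps].
  rewrite -[RHS](wq q q2) [LHS]big_mkcond; apply: eq_bigr => i _.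
  by rewrite inE; case: eqP => // /eqP si; rewrite w0 ?mul0r.
by rewrite big1 // => i; rewrite inE => /eqP si; rewrite w0 ?mul0r // si.
Qed.

(* Dependence witnesses: a row of a rank-0 side is zero, two rows of a rank-1
   side are equal, and three vectors of the plane satisfy the cofactor
   relation. *)
Lemma side_dep_witness s : (rk s < #|on_side s|)%N ->
  exists w : 'I_k -> Rdefinitions.R,
    [/\ exists i, w i != 0, forall i, side i != s -> w i = 0 &
        forall q, (q < 2)%N -> \sum_i w i * (side_entry (rk s) (idx i) q)%:~R = 0].
Proof.
have := rk_le2 s; case: (rk s) => [|[|[|//]]] _ too_many.
- have /card_gt0P[i0] := too_many; rewrite inE => /eqP si0.
  exists (fun i => if i == i0 then 1 else 0); split.
  + by exists i0; rewrite eqxx oner_eq0.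
  + by move=> i; have [->|_] := eqVneq i i0; rewrite ?si0 ?eqxx.
  + by move=> q _; rewrite big1 // => i _; case: q => [|[|q]]; rewrite mulr0.
- have /card_gt1P[i0 [i1 []]] := too_many; rewrite !inE => /eqP si0 /eqP si1 i01.
  exists (fun i => if i == i0 then 1 else if i == i1 then -1 else 0); split.
  + by exists i0; rewrite eqxx oner_eq0.
  + move=> i si; have [ei|_] := eqVneq i i0; first by rewrite ei si0 eqxx in si.
    by have [ei|_] := eqVneq i i1; first by rewrite ei si1 eqxx in si.
  + move=> q _; rewrite (big_supp2 (i0 := i0) (i1 := i1)) 1?eq_sym //.
      have -> : side_entry 1 (idx i1) q = side_entry 1 (idx i0) q by [].
      by rewrite !eqxx eq_sym (negbTE i01) mul1r mulN1r addrN.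
    by move=> i /negbTE-> /negbTE->; rewrite mul0r.
have /card_gt2P[i0 [i1 [i2 [[]]]]] := too_many.
rewrite !inE => /eqP si0 /eqP si1 /eqP si2 [i01 i12 i20].
have i10 : i1 != i0 by rewrite eq_sym.
have i21 : i2 != i1 by rewrite eq_sym.
pose d a b := side_entry 2 (idx a) 0 * side_entry 2 (idx b) 1
              - side_entry 2 (idx a) 1 * side_entry 2 (idx b) 0.
exists (fun i => if i == i0 then (d i1 i2)%:~R else if i == i1 then (d i2 i0)%:~R
                 else if i == i2 then (d i0 i1)%:~R else 0); split.
- exists i0; rewrite eqxx intr_eq0; apply: side_entry_det_neq0; rewrite ?idx_lt4 //.
  by apply: idx_inj; rewrite ?si1 ?si2.
- move=> i si; do 3![have [ei|_] := eqVneq i _; first by rewrite ei ?si0 ?si1 ?si2 eqxx in si].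
  by [].
- move=> q q2; rewrite (big_supp3 i10 i20 i21); last first.
    by move=> i /negbTE-> /negbTE-> /negbTE->; rewrite mul0r.
  rewrite !eqxx (negbTE i10) (negbTE i20) (negbTE i21) /= -!intrM -!intrD.
  apply/eqP; rewrite intr_eq0.
  by apply/eqP; rewrite /d; case: q q2 => [|[|]] // _; ring.
Qed.

Lemma side_rows_dep :
  (forall v : 'rV_k, v *m V = 0 -> v = 0) -> forall s, (#|on_side s| <= rk s)%N.
Proof.
move=> free s; rewrite leqNgt; apply/negP => /side_dep_witness[w [[i0 wi0] w0 wq]].
have /rowP/(_ i0) := free _ (side_support_mulmx w0 wq).
by rewrite !mxE => wi00; rewrite wi00 eqxx in wi0.
Qed.

Lemma side_rows_freeP :
  (forall v : 'rV_k, v *m V = 0 -> v = 0) <-> (forall s, (#|on_side s| <= rk s)%N).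
Proof. by split; [exact: side_rows_dep|exact: side_rows_free]. Qed.

End SideCodeRows.

Fixpoint lists_over (L : seq nat) (r : nat) : seq (seq nat) :=
  if r is r'.+1 then [seq x :: s | x <- L, s <- lists_over L r'] else [:: [::]].

Lemma lists_overP L r s : size s = r -> {subset s <= L} -> s \in lists_over L r.
Proof.
elim: s r => [|x s IHs] [|r] //= [sr] sL.
apply: allpairs_f; first by apply: sL; rewrite mem_head.
by apply: IHs => // y ys; apply: sL; rewrite in_cons ys orbT.
Qed.

Definition code_minor (rows cols : seq nat) (i j : nat) : int :=
  rep_col (nth 0%N cols j) (nth 0%N rows i).

(* [if] rather than [||]: the VM evaluates both arguments of [orb]. *)
Definition minors_le2 (L : seq nat) (r : nat) : bool :=
  all (fun rows => if uniq rows then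
         all (fun cols => `|detf r (code_minor rows cols)| <= 2) (lists_over L r)
       else true)
    (lists_over (iota 0 4) r).

(* Every code except that of e - f on side [s]. *)
Definition codes_but (s : bool) : seq nat :=
  if s then [:: 0; 1; 2; 3; 4; 5; 6; 7]%N else [:: 0; 1; 2; 3; 5; 6; 7; 8]%N.

Lemma minors_le2_codes_but s : all (minors_le2 (codes_but s)) (iota 0 5).
Proof. by case: s; vm_compute. Qed.

Lemma side_code_but r s i s0 : (s = s0 -> (i <= 2)%N) -> side_code r s i \in codes_but s0.
Proof.
rewrite /side_code; case: r => [|[|r]]; case: s; case: s0;
  by case: i => [|[|[|i]]] // /(_ erefl).
Qed.

Lemma code_submx_det_le2 (L : seq nat) r (M : 'M[int]_r)
    (rows : 'I_r -> 'I_4) (cols : 'I_r -> nat) :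
    all (minors_le2 L) (iota 0 5) -> injective rows -> (forall j, cols j \in L) ->
    (forall i j, M i j = rep_col (cols j) (rows i)) ->
  `|\det M| <= 2.
Proof.
move=> chk rows_inj colsL ME.
have r4 : (r <= 4)%N by have := leq_card rows rows_inj; rewrite !card_ord.
pose rs := [seq val (rows i) | i <- enum 'I_r].
pose cs := [seq cols i | i <- enum 'I_r].
rewrite (detfE (B := code_minor rs cs)) // => [|i j]; last first.
  by rewrite ME /code_minor !(nth_map i) -?enumT ?size_enum_ord // !nth_ord_enum.
have rs_over : rs \in lists_over (iota 0 4) r.
  apply: lists_overP; first by rewrite size_map size_enum_ord.
  by move=> _ /mapP[i _ ->]; rewrite mem_iota leq0n ltn_ord.
have cs_over : cs \in lists_over L r.
  apply: lists_overP; first by rewrite size_map size_enum_ord.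
  by move=> _ /mapP[i _ ->]; apply: colsL.
have rs_uniq : uniq rs.
  by rewrite map_inj_uniq ?enum_uniq // => i j /val_inj/rows_inj.
have r5 : r \in iota 0 5 by rewrite mem_iota leq0n add0n ltnS.
move/allP: chk => /(_ r r5) /allP/(_ rs rs_over).
by rewrite rs_uniq => /allP/(_ cs cs_over).
Qed.

Lemma U24_plus_U24_sides s Z :
  U24_plus_U24 Z = (#|part s Z| <= 2)%N && (#|part (~~ s) Z| <= 2)%N.
Proof. by case: s; rewrite // andbC. Qed.

Lemma partS s (Z Z' : {set T4}) : Z \subset Z' -> part s Z \subset part s Z'.
Proof. by move/subsetP=> ZZ'; apply/subsetP => a; rewrite !partE => /ZZ'. Qed.

Lemma partU s (Z Z' : {set T4}) : part s (Z :|: Z') = part s Z :|: part s Z'.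
Proof. by apply/setP => a; rewrite !(partE, inE). Qed.

Lemma part_setU1 s a Z : part s (elem s a |: Z) = a |: part s Z.
Proof. by apply/setP => b; rewrite !(partE, inE) elem_eq. Qed.

Lemma part_setU1_other s a Z : part (~~ s) (elem s a |: Z) = part (~~ s) Z.
Proof. by apply/setP => b; rewrite !(partE, inE) elem_eq_other. Qed.

Section MinorOfU24.
Variables C D : {set T4}.

Lemma max_indep_part (B : {set T4}) s : B \subset C -> U24_plus_U24 B ->
    (forall B' : {set T4}, [&& B \subset B', B' \subset C & U24_plus_U24 B'] -> B' = B) ->
  #|part s B| = minn 2 #|part s C|.
Proof.
move=> BC UB Bmax; move: (UB); rewrite (U24_plus_U24_sides s) => /andP[Bs Bs'].
have BsC := subset_leq_card (partS s BC).
apply/eqP; rewrite eqn_leq leq_min Bs BsC leqNgt; apply/negP => lt.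
have /subsetPn[a aC aB] : ~~ (part s C \subset part s B).
  by apply/negP => /subset_leq_card; lia.
have eqB : elem s a |: B = B.
  apply: Bmax; rewrite subsetUr subUset sub1set -partE aC BC /=.
  rewrite (U24_plus_U24_sides s) part_setU1 part_setU1_other Bs' cardsU1 aB andbT.
  by rewrite add1n; lia.
by move: aB; rewrite -eqB part_setU1 setU11.
Qed.

Lemma exists_max_indep : exists B : {set T4}, [&& B \subset C, U24_plus_U24 B &
  [forall B' : {set T4}, [&& B \subset B', B' \subset C & U24_plus_U24 B'] ==> (B' == B)]].
Proof.
have part0 s : part s set0 = set0 by apply/setP => a; rewrite partE !inE.
have set0_ok : (set0 \subset C) && U24_plus_U24 set0.
  by rewrite sub0set (U24_plus_U24_sides false) !part0 cards0.
have [B /andP[BC UB] Bmax] := @arg_maxnP _ set0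
  (fun B : {set T4} => (B \subset C) && U24_plus_U24 B) (fun B => #|B|) set0_ok.
exists B; rewrite BC UB; apply/forallP => B'; apply/implyP => /and3P[BB' B'C UB'].
by rewrite eq_sym eqEcard BB' /=; apply: Bmax; rewrite B'C UB'.
Qed.

Lemma minor_U24_plus_U24E (X : {set minor_ground C D}) :
  minor U24_plus_U24 C D X =
  [forall s, #|part s [set val x | x in X]| + minn 2 #|part s C| <= 2]%N.
Proof.
set V := [set val x | x in X].
have VC x : x \in V -> x \notin C.
  by case/imsetP => y _ ->; have := valP y; rewrite inE negb_or => /andP[].
have card_split (B : {set T4}) s : B \subset C ->
    #|part s (V :|: B)| = (#|part s V| + #|part s B|)%N.
  move=> BC; rewrite partU cardsU; suff -> : part s V :&: part s B = set0.
    by rewrite cards0 subn0.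
  apply/setP => a; rewrite !(inE, partE); apply/negP => /andP[/VC aC /(subsetP BC)].
  by rewrite (negbTE aC).
apply/existsP/forallP => [[B /and4P[BC UB /forallP Bmax UVB]] s|VCs].
  have Bmax' (B' : {set T4}) : [&& B \subset B', B' \subset C & U24_plus_U24 B'] -> B' = B.
    by move=> hB'; apply/eqP; apply: (implyP (Bmax B') hB').
  move: UVB; rewrite (U24_plus_U24_sides s) card_split //.
  by rewrite (max_indep_part s BC UB Bmax') => /andP[].
have [B /and3P[BC UB Bmax]] := exists_max_indep.
exists B; rewrite BC UB Bmax /= -[[set _ | _ in X]]/V (U24_plus_U24_sides false) !card_split //.
have Bmax' (B' : {set T4}) : [&& B \subset B', B' \subset C & U24_plus_U24 B'] -> B' = B.
  by move=> hB'; apply/eqP; apply: (implyP (forallP Bmax B') hB').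
by rewrite !(max_indep_part _ BC UB Bmax') (VCs false) (VCs true).
Qed.

End MinorOfU24.

Definition rank_below n (P : pred 'I_n) (a : 'I_n) : nat :=
  #|[set b : 'I_n | (b < a)%N && P b]|.

Lemma rank_below_lt n (P : pred 'I_n) a : (rank_below P a < n)%N.
Proof.
apply: (@leq_trans #|[set: 'I_n]|); last by rewrite cardsT card_ord.
apply: proper_card; apply/properP; split; first exact: subsetT.
by exists a; rewrite !inE ?ltnn.
Qed.

Lemma rank_below_inj n (P : pred 'I_n) a b : P a -> P b -> a != b ->
  rank_below P a != rank_below P b.
Proof.
have mono (x y : 'I_n) : P x -> (x < y)%N -> (rank_below P x < rank_below P y)%N.
  move=> Px xy; apply: proper_card; apply/properP; split.
    by apply/subsetP => c; rewrite !inE => /andP[cx ->]; rewrite (ltn_trans cx xy).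
  by exists x; rewrite !inE ?ltnn // xy Px.
move=> Pa Pb ab; case: (ltngtP a b) => [lt|lt|/val_inj eq_ab].
- by rewrite neq_ltn (mono a b).
- by rewrite neq_ltn (mono b a) ?orbT.
- by rewrite eq_ab eqxx in ab.
Qed.

Lemma rank_below_le n (P : pred 'I_n) a b : P a -> ~~ P b ->
  (rank_below P a <= n - 2)%N.
Proof.
move=> Pa Pb; have ab : a != b by apply: contraNneq Pb => <-.
have : (rank_below P a <= #|~: [set a; b]|)%N.
  apply/subset_leq_card/subsetP => c; rewrite !inE negb_or => /andP[ca Pc].
  apply/andP; split; first by apply: contraTneq ca => ->; rewrite ltnn.
  by apply: contraTneq Pc => ->.
by have := cardsC [set a; b]; rewrite cards2 ab card_ord; lia.
Qed.

(* Side [s] of the minor is the uniform matroid of rank [minor_rank s] on its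
   kept elements, numbered by [minor_index]. *)
Section MinorRep.
Variables C D : {set T4}.
Local Notation G := (minor_ground C D).

Definition kept (x : T4) : bool := x \notin C :|: D.

Definition minor_rank (s : bool) : nat := 2 - minn 2 #|part s C|.

Definition minor_index (x : T4) : nat :=
  rank_below (fun b => kept (elem (side_of x) b)) (ord_of x).

Definition minor_code (x : T4) : nat :=
  side_code (minor_rank (side_of x)) (side_of x) (minor_index x).

Definition minor_rep : 'M[int]_(4, #|{: G}|) :=
  \matrix_(p, j) rep_col (minor_code (val (enum_val j))) p.

Lemma minor_rep_2modular : C :|: D != set0 -> Delta_modular 2 minor_rep.
Proof.
case/set0Pn => x xCD r f g f_inj _.
have gone : ~~ kept (elem (side_of x) (ord_of x)) by rewrite elem_sideK /kept xCD.
apply: (@code_submx_det_le2 (codes_but (side_of x)) _ (mxsub f g minor_rep) f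
  (fun j => minor_code (val (enum_val (g j))))) f_inj _ _.
- exact: minors_le2_codes_but.
- move=> j; set y := val _; apply: side_code_but => ys.
  apply: (rank_below_le (b := ord_of x)); last by rewrite ys.
  by rewrite /= elem_sideK; apply: valP.
- by move=> i j; rewrite !mxE.
Qed.

Lemma minor_rep_iso (X : {set G}) :
  minor U24_plus_U24 C D X = real_vector_matroid minor_rep (enum_rank @: X).
Proof.
rewrite minor_U24_plus_U24E real_vector_matroidE /rows_rank -/(row_free _).
set Y := enum_rank @: X; set V := [set val y | y in X].
pose e (i : 'I_#|Y|) : T4 := val (enum_val (enum_val i : 'I_#|{: G}|)).
have e_inj : injective e by move=> i j /val_inj/enum_val_inj/enum_val_inj.
have e_kept i : kept (e i) := valP _.
have e_img x : (x \in V) = [exists i, e i == x].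
  apply/imsetP/existsP => [[y yX ->]|[i /eqP <-]].
    have yY : enum_rank y \in Y by apply: imset_f.
    by exists (enum_rank_in yY (enum_rank y)); rewrite /e enum_rankK_in // enum_rankK.
  have /imsetP[y yX yi] := enum_valP i.
  by exists y => //; rewrite /e yi enum_rankK.
have card_side s : #|[set i | side_of (e i) == s]| = #|part s V|.
  rewrite -(card_imset _ e_inj) -(card_imset _ (@elem_inj s)); apply: eq_card => x.
  apply/imsetP/imsetP => [[i /[!inE] /eqP si ->]|[a /[!partE] aV ->]].
    exists (ord_of (e i)); last by rewrite -si elem_sideK.
    by rewrite partE -si elem_sideK e_img; apply/existsP; exists i.
  move: aV; rewrite e_img => /existsP[i /eqP ei].
  by exists i; rewrite ?inE ei ?elem_side.
have idx_inj i j : i != j -> side_of (e i) = side_of (e j) ->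
    minor_index (e i) != minor_index (e j).
  move=> ij sij; rewrite /minor_index sij; apply: rank_below_inj.
  - by rewrite -sij elem_sideK.
  - by rewrite elem_sideK.
  apply: contra ij => /eqP oij; apply/eqP/e_inj.
  by rewrite -[e i]elem_sideK -[e j]elem_sideK sij oij.
have VE i p : (rowsub (fun i : 'I_#|Y| => enum_val i) (mxR minor_rep)^T) i p =
    (rep_col (minor_code (e i)) p)%:~R by rewrite !mxE.
have freeP := @side_rows_freeP _ (side_of \o e) (minor_index \o e) minor_rank
  (fun s => leq_subr _ _) idx_inj (fun i => rank_below_lt _ _) _ VE.
apply/forallP/row_free_mul0P => [ok|/freeP sides s].
  apply/freeP => s; rewrite card_side /minor_rank leq_subRL ?geq_minl //.
  by rewrite addnC ok.
by have := sides s; rewrite card_side /minor_rank leq_subRL ?geq_minl // addnC.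
Qed.

End MinorRep.

Lemma proper_minor_in_M2 C D : C :|: D != set0 -> in_M2 (minor U24_plus_U24 C D).
Proof.
move=> CD0; exists 4%N, #|{: minor_ground C D}|, (minor_rep C D).
split; first exact: minor_rep_2modular.
by exists enum_rank; split; [exact: enum_rank_bij|exact: minor_rep_iso].
Qed.

Theorem proposition4p3 :
  ~ in_M2 U24_plus_U24 /\
  (forall C D : {set 'I_4 + 'I_4},
     [disjoint C & D] -> C :|: D != set0 ->
     in_M2 (minor U24_plus_U24 C D)).
Proof.
split; first exact: U24_plus_U24_notin_M2.
by move=> C D _; apply: proper_minor_in_M2.
Qed.
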